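(* Let $D$ be a square-free integer and let $\mathbb{Z}[\sqrt{D}]$ denote the ring of integers of $\mathbb{Q}(\sqrt{D})$. Let $A\in\mathbb{M}_2(\mathbb{Z}[\sqrt{D}])$ be a singular matrix. If $A$ is similar (via an invertible matrix in $\mathbb{M}_2(\mathbb{Z}[\sqrt{D}])$) to a matrix having at least one row or column whose entries generate a principal ideal of $\mathbb{Z}[\sqrt{D}]$, then $A$ is a column--row matrix.
   Context: A matrix $M\in\mathbb{M}_2(R)$ is called column--row if there exist $a,b,c,d\in R$ such that $M=\begin{pmatrix} a&0\\ b&0\end{pmatrix}\begin{pmatrix} c&d\\ 0&0\end{pmatrix}$. $\mathbb{Z}[\sqrt{D}]=\{a+b\sqrt{D}:a,b\in\mathbb{Z}\}$ if $D\equiv 2,3 \pmod 4$ and $\{\frac{a+b\sqrt{D}}{2}:a\equiv b \pmod 2\}$ if $D\equiv 1\pmod 4$. *)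

From mathcomp Require Import all_boot all_order all_algebra algC.
Set Implicit Arguments. Unset Strict Implicit. Unset Printing Implicit Defensive.
Import Order.TTheory GRing.Theory Num.Theory.
Local Open Scope ring_scope.

Definition squarefree (D : int) : Prop :=
  D != 0 /\ forall p : nat, prime p -> ~~ ((p * p)%N %| `|D|%N)%N.

Definition sqrtD (D : int) : algC := sqrtC (D%:~R).

(* Membership in Z[sqrt D] (the ring of integers of Q(sqrt D)), as in the paper:
   {a + b sqrt D : a, b in Z}                      if D = 2,3 mod 4,
   {(a + b sqrt D)/2 : a, b in Z, a = b mod 2}      if D = 1 mod 4. *)
Definition inO (D : int) (x : algC) : Prop :=
  if (D %% 4)%Z == 1 then
    exists a b : int, (a %% 2)%Z = (b %% 2)%Z /\ x = (a%:~R + b%:~R * sqrtD D) / 2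
  else exists a b : int, x = a%:~R + b%:~R * sqrtD D.

Definition mxO (D : int) (A : 'M[algC]_2) : Prop := forall i j, inO D (A i j).

Definition principal2 (D : int) (u v : algC) : Prop :=
  exists g, inO D g /\
    (exists r s, inO D r /\ inO D s /\ g = r * u + s * v) /\
    (exists k l, inO D k /\ inO D l /\ u = k * g /\ v = l * g).

Definition has_principal_line (D : int) (B : 'M[algC]_2) : Prop :=
  (exists i : 'I_2, principal2 D (B i 0) (B i 1)) \/
  (exists j : 'I_2, principal2 D (B 0 j) (B 1 j)).

Definition similarO (D : int) (A B : 'M[algC]_2) : Prop :=
  exists P Q : 'M[algC]_2, mxO D P /\ mxO D Q /\ P *m Q = 1%:M /\ Q *m P = 1%:M /\
    A = P *m B *m Q.

Definition column_row (D : int) (M : 'M[algC]_2) : Prop :=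
  exists a b c d, inO D a /\ inO D b /\ inO D c /\ inO D d /\
    M = (\matrix_(i < 2, j < 2) (if j == 0 then (if i == 0 then a else b) else 0)) *m
        (\matrix_(i < 2, j < 2) (if i == 0 then (if j == 0 then c else d) else 0)).

From mathcomp Require Import all_boot all_order all_algebra algC.
From mathcomp Require Import ring.

(* If a row (u, v) of the singular matrix B generates a nonzero principal ideal
   (g), then (u, v) = g (k, l) with r k + s l = 1, and singularity forces the
   other row (u', v') to be (r u' + s v') (k, l); so B is a column times a row
   over O (if g = 0 the row vanishes and B is a multiple of its other row).
   Multiplying on either side by matrices over O preserves such a
   factorisation, and nothing beyond O being a subring of a domain is used; in
   particular D need not be square-free. *)

Set Implicit Arguments.
Unset Strict Implicit.
Unset Printing Implicit Defensive.
Import Order.TTheory GRing.Theory Num.Theory.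
Local Open Scope ring_scope.

Lemma ord2P (i : 'I_2) : i = 0 \/ i = 1.
Proof. by case: i => [[|[|//]]] ?; [left | right]; apply/val_inj. Qed.

Lemma ord2_other (i : 'I_2) : exists2 j, j != i & forall t, t = i \/ t = j.
Proof.
by case: (ord2P i) => ->; [exists 1 | exists 0] => // t; case: (ord2P t) => ->; auto.
Qed.

Lemma det_mx22 (R : comPzRingType) (B : 'M[R]_2) :
  \det B = B 0 0 * B 1 1 - B 0 1 * B 1 0.
Proof.
rewrite (expand_det_row _ 0) !big_ord_recl big_ord0 /cofactor !det_mx11 !mxE /=.
rewrite (_ : lift (lift ord0 ord0) 0 = 0 :> 'I_2); last exact: val_inj.
rewrite (_ : lift ord0 ord0 = 1 :> 'I_2); last exact: val_inj.
by rewrite expr0 expr1 /=; ring.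
Qed.

Lemma det_mx22_eq0 (R : comPzRingType) (B : 'M[R]_2) :
  \det B = 0 -> forall i j, B i 0 * B j 1 = B i 1 * B j 0.
Proof.
rewrite det_mx22 => /eqP; rewrite subr_eq0 => /eqP detB i j.
by case: (ord2P i) => ->; case: (ord2P j) => ->; rewrite // mulrC // -detB mulrC.
Qed.

Lemma unimodular_proportional (R : comPzRingType) (k l r s u v : R) :
  r * k + s * l = 1 -> k * v = l * u ->
  u = (r * u + s * v) * k /\ v = (r * u + s * v) * l.
Proof.
move=> unit_kl cross; split.
- rewrite -[LHS]mulr1 -unit_kl.
  have -> : u * (r * k + s * l) = r * u * k + s * (l * u) by ring.
  by rewrite -cross; ring.
- rewrite -[LHS]mulr1 -unit_kl.
  have -> : v * (r * k + s * l) = r * (k * v) + s * v * l by ring.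
  by rewrite cross; ring.
Qed.

Section SubringMatrices.

Variables (R : idomainType) (S : R -> Prop).
Hypotheses (S0 : S 0) (S1 : S 1).
Hypotheses (SD : forall x y, S x -> S y -> S (x + y)).
Hypotheses (SM : forall x y, S x -> S y -> S (x * y)).

Definition mx_over m n (M : 'M[R]_(m, n)) := forall i j, S (M i j).

Definition col_row_over m n (M : 'M[R]_(m, n)) :=
  exists (c : 'cV_m) (r : 'rV_n), mx_over c /\ mx_over r /\ M = c *m r.

Definition principal_pair (u v : R) :=
  exists g, S g /\
    (exists r s, S r /\ S s /\ g = r * u + s * v) /\
    (exists k l, S k /\ S l /\ u = k * g /\ v = l * g).

Definition principal_line (B : 'M[R]_2) :=
  (exists i : 'I_2, principal_pair (B i 0) (B i 1)) \/
  (exists j : 'I_2, principal_pair (B 0 j) (B 1 j)).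

Lemma mx_overM m n p (A : 'M_(m, n)) (B : 'M_(n, p)) :
  mx_over A -> mx_over B -> mx_over (A *m B).
Proof.
move=> SA SB i j; rewrite mxE.
by elim/big_rec: _ => // k x _ Sx; apply: SD => //; apply: SM.
Qed.

Lemma mx_over_tr m n (A : 'M_(m, n)) : mx_over A -> mx_over A^T.
Proof. by move=> SA i j; rewrite mxE. Qed.

Lemma col_row_over_mull m n p (P : 'M_(m, n)) (M : 'M_(n, p)) :
  mx_over P -> col_row_over M -> col_row_over (P *m M).
Proof.
move=> SP [c [r [Sc [Sr ->]]]]; exists (P *m c), r.
by split; [exact: mx_overM | split; last rewrite mulmxA].
Qed.

Lemma col_row_over_mulr m n p (M : 'M_(m, n)) (Q : 'M_(n, p)) :
  mx_over Q -> col_row_over M -> col_row_over (M *m Q).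
Proof.
move=> SQ [c [r [Sc [Sr ->]]]]; exists c, (r *m Q).
by split; [| split; [exact: mx_overM | rewrite mulmxA]].
Qed.

Lemma col_row_over_tr m n (M : 'M_(m, n)) :
  col_row_over M -> col_row_over M^T.
Proof.
move=> [c [r [Sc [Sr ->]]]]; exists r^T, c^T.
by split; [| split]; rewrite ?trmx_mul //; apply: mx_over_tr.
Qed.

Lemma col_row_over_principal_row (B : 'M_2) i :
  mx_over B -> \det B = 0 -> principal_pair (B i 0) (B i 1) -> col_row_over B.
Proof.
move=> SB /det_mx22_eq0 cross [g [Sg [[r [s [Sr [Ss grs]]]] [k [l [Sk [Sl [Bi0 Bi1]]]]]]]].
have [j ji ij] := ord2_other i.
have Bi c : B i c = g * (if c == 0 then k else l).
  by case: (ord2P c) => ->; rewrite /= mulrC.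
have [g0 | gn0] := eqVneq g 0.
  exists (\col_t (t != i)%:R), (row j B).
  split; first by move=> t c; rewrite mxE; case: (t != i).
  split; first by move=> t c; rewrite mxE.
  apply/matrixP => t c; rewrite mxE big_ord1 !mxE.
  by case: (ij t) => ->; rewrite ?eqxx ?ji ?mul1r // mul0r Bi g0 mul0r.
have unit_kl : r * k + s * l = 1.
  by apply: (mulfI gn0); rewrite mulr1 {2}grs Bi0 Bi1; ring.
have cross_kl : k * B j 1 = l * B j 0.
  by apply: (mulfI gn0); rewrite !mulrA ![g * _]mulrC -Bi0 -Bi1 cross.
have [Bj0 Bj1] := unimodular_proportional unit_kl cross_kl.
exists (\col_t (if t == i then g else r * B j 0 + s * B j 1)),
       (\row_c (if c == 0 then k else l)).
split; first by move=> t c; rewrite mxE; case: (_ == _) => //; apply: SD; apply: SM.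
split; first by move=> t c; rewrite mxE; case: (_ == _).
apply/matrixP => t c; rewrite mxE big_ord1 !mxE.
case: (ij t) => ->; first by rewrite eqxx Bi.
by rewrite (negbTE ji); case: (ord2P c) => ->.
Qed.

Lemma col_row_over_principal_line (B : 'M_2) :
  mx_over B -> \det B = 0 -> principal_line B -> col_row_over B.
Proof.
move=> SB detB [[i Bi] | [j Bj]]; first exact: col_row_over_principal_row Bi.
rewrite -[B]trmxK; apply: col_row_over_tr.
apply: (@col_row_over_principal_row _ j); rewrite ?det_tr ?mxE //.
exact: mx_over_tr.
Qed.

End SubringMatrices.

Definition omegaD (D : int) : algC :=
  if (D %% 4)%Z == 1 then (1 + sqrtD D) / 2 else sqrtD D.

Lemma omegaD_sqr D : exists e f : int, omegaD D ^+ 2 = e%:~R + f%:~R * omegaD D.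
Proof.
have sqrtD_sqr : sqrtD D ^+ 2 = D%:~R by rewrite /sqrtD sqrtCK.
rewrite /omegaD; case: ifP => [/eqP D1 | _]; last first.
  by exists D, 0; rewrite sqrtD_sqr mul0r addr0.
exists (D %/ 4)%Z, 1.
have divD : D = (D %/ 4)%Z * 4 + 1 by rewrite {1}(divz_eq D 4) D1.
have nz2 : (2 : algC) != 0 by rewrite pnatr_eq0.
have -> : ((1 + sqrtD D) / 2) ^+ 2 = (1 + 2 * sqrtD D + sqrtD D ^+ 2) / 4 by field.
by rewrite sqrtD_sqr {2}divD rmorphD rmorphM /= rmorph1 (_ : 4%:~R = 4) //; field.
Qed.

Lemma inO_omegaD D x : inO D x <-> exists a b : int, x = a%:~R + b%:~R * omegaD D.
Proof.
have nz2 : (2 : algC) != 0 by rewrite pnatr_eq0.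
rewrite /inO /omegaD; case: eqP => _; last by [].
split=> [[a [b [ab2 ->]]] | [a [b ->]]].
- exists ((a %/ 2)%Z - (b %/ 2)%Z), b.
  have diva : a%:~R = ((a %/ 2)%Z)%:~R * 2 + ((a %% 2)%Z)%:~R :> algC.
    by rewrite {1}(divz_eq a 2) rmorphD rmorphM.
  have divb : b%:~R = ((b %/ 2)%Z)%:~R * 2 + ((b %% 2)%Z)%:~R :> algC.
    by rewrite {1}(divz_eq b 2) rmorphD rmorphM.
  by rewrite diva divb ab2 rmorphB /=; field.
- exists (a * 2 + b)%Z, b; split; first by rewrite modzMDl.
  by rewrite rmorphD rmorphM /=; field.
Qed.

Lemma inO0 D : inO D 0.
Proof. by apply/inO_omegaD; exists 0, 0; rewrite mul0r addr0. Qed.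

Lemma inO1 D : inO D 1.
Proof. by apply/inO_omegaD; exists 1, 0; rewrite mul0r addr0. Qed.

Lemma inOD D x y : inO D x -> inO D y -> inO D (x + y).
Proof.
move=> /inO_omegaD[a [b ->]] /inO_omegaD[c [d ->]]; apply/inO_omegaD.
by exists (a + c), (b + d); rewrite !rmorphD; ring.
Qed.

Lemma inOM D x y : inO D x -> inO D y -> inO D (x * y).
Proof.
move=> /inO_omegaD[a [b ->]] /inO_omegaD[c [d ->]]; apply/inO_omegaD.
have [e [f omega_sqr]] := omegaD_sqr D.
exists (a * c + b * d * e), (a * d + b * c + b * d * f).
rewrite !rmorphD !rmorphM /=.
transitivity (a%:~R * c%:~R + (a%:~R * d%:~R + b%:~R * c%:~R) * omegaD D
              + b%:~R * d%:~R * omegaD D ^+ 2 : algC); first by ring.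
by rewrite omega_sqr; ring.
Qed.

Lemma column_row_col_row_over D (M : 'M[algC]_2) :
  col_row_over (inO D) M -> column_row D M.
Proof.
move=> [c [r [Sc [Sr ->]]]].
exists (c 0 0), (c 1 0), (r 0 0), (r 0 1); do 4 (split; first by []).
apply/matrixP => i j; rewrite !mxE big_ord1 !big_ord_recl big_ord0 !mxE /=.
by rewrite !mulr0 !addr0; case: (ord2P i) => ->; case: (ord2P j) => ->.
Qed.

Theorem proposition2p5 (D : int) (A : 'M[algC]_2) :
  squarefree D -> mxO D A -> \det A = 0 ->
  (exists B : 'M[algC]_2, mxO D B /\ similarO D A B /\ has_principal_line D B) ->
  column_row D A.
Proof.
move=> _ _ detA [B [OB [[P [Q [OP [OQ [_ [QP defA]]]]]] lineB]]].
have detB : \det B = 0.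
  have -> : B = Q *m A *m P by rewrite defA !mulmxA QP mul1mx -mulmxA QP mulmx1.
  by rewrite !det_mulmx detA mulr0 mul0r.
have O0 := inO0 D; have O1 := inO1 D; have OD := @inOD D; have OM := @inOM D.
apply: column_row_col_row_over; rewrite defA.
apply: (col_row_over_mulr O0 OD OM OQ); apply: (col_row_over_mull O0 OD OM OP).
exact: (col_row_over_principal_line O0 O1 OD OM OB detB lineB).
Qed.
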